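(* For all integers $n$ and $\alpha$ with $n\le\alpha\le 2^{n-1}+1$, there exists a minimal $n$-state nondeterministic finite automaton accepting a suffix-closed language whose equivalent minimal deterministic finite automaton has exactly $\alpha$ states.
   Context: NFAs have a single initial state and a transition function $\delta:Q\times\Sigma\to 2^Q$ that may map to the empty set (no sink state is needed or counted); DFAs are complete, so a sink state is counted. A minimal $n$-state NFA is an NFA with $n$ states such that no NFA with fewer states accepts the same language. A language $L\subseteq\Sigma^*$ is suffix-closed if $yz\in L$ implies $z\in L$ for all $y,z\in\Sigma^*$. *)

From mathcomp Require Import all_boot.
Set Implicit Arguments. Unset Strict Implicit. Unset Printing Implicit Defensive.

(* NFA over alphabet S with state set 'I_n: single initial state,
   transition function 'I_n -> S -> {set 'I_n} (may be empty, no sink counted). *)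
Record nfa (S : finType) (n : nat) := NFA {
  n_init : 'I_n;
  n_delta : 'I_n -> S -> {set 'I_n};
  n_final : {set 'I_n} }.

Definition nfa_reach (S : finType) (n : nat) (A : nfa S n) (X : {set 'I_n}) (w : seq S)
  : {set 'I_n} :=
  foldl (fun (Y : {set 'I_n}) (a : S) => \bigcup_(q in Y) n_delta A q a) X w.

Definition nfa_accepts (S : finType) (n : nat) (A : nfa S n) (w : seq S) : bool :=
  [exists q in nfa_reach A [set n_init A] w, q \in n_final A].

(* complete DFA with state set 'I_m (sink states are counted) *)
Record dfa (S : finType) (m : nat) := DFA {
  d_init : 'I_m;
  d_delta : 'I_m -> S -> 'I_m;
  d_final : {set 'I_m} }.

Definition dfa_accepts (S : finType) (m : nat) (D : dfa S m) (w : seq S) : bool :=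
  foldl (d_delta D) (d_init D) w \in d_final D.

Definition suffix_closed (S : finType) (L : seq S -> bool) : Prop :=
  forall y z : seq S, L (y ++ z) -> L z.

Definition minimal_nfa (S : finType) (n : nat) (A : nfa S n) : Prop :=
  forall (m : nat) (B : nfa S m), (forall w, nfa_accepts B w = nfa_accepts A w) -> n <= m.

Definition min_dfa_states (S : finType) (L : seq S -> bool) (alpha : nat) : Prop :=
  (exists D : dfa S alpha, forall w, dfa_accepts D w = L w) /\
  (forall (m : nat) (D : dfa S m), (forall w, dfa_accepts D w = L w) -> alpha <= m).

From mathcomp Require Import all_boot zify.
Set Implicit Arguments. Unset Strict Implicit. Unset Printing Implicit Defensive.

(** Write n = k + 1 and take states 0, ..., k, with 0 both initial and the
    only final state.  For a family F of subsets of states there is a letter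
    a_X for each X in F, sending every state onto X, and a letter b_i for each
    state i, sending 0 and i to {0, k} and every other state to {k}.  Every
    transition of a state is contained in the corresponding transition of 0 and
    0 is final, so the language is suffix-closed and every subset containing 0
    behaves like {0} in the subset construction.  If F consists of {0}, all
    singletons and alpha - n further subsets avoiding 0 (there are
    2^(n-1) - (n-1) candidates), the reachable subsets of the determinised
    automaton are, up to this identification, exactly the members of F, and
    the letters b_i separate them; hence the minimal DFA has |F| = alpha
    states.  The pairs (a_{i}, b_i), with b_0 replaced by the empty word, form
    a fooling set of size n, so the NFA is minimal. *)

Section NfaReach.
Variables (S : finType) (n : nat) (A : nfa S n).
Implicit Types (X Y : {set 'I_n}) (q : 'I_n) (a : S) (w u v : seq S).

Definition nfa_step (X : {set 'I_n}) (a : S) : {set 'I_n} :=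
  \bigcup_(q in X) n_delta A q a.

Definition nfa_accepts_from (q : 'I_n) (w : seq S) : bool :=
  [exists f in nfa_reach A [set q] w, f \in n_final A].

Lemma nfa_reach_cons X a w : nfa_reach A X (a :: w) = nfa_reach A (nfa_step X a) w.
Proof. by []. Qed.

Lemma nfa_reach_cat X u v : nfa_reach A X (u ++ v) = nfa_reach A (nfa_reach A X u) v.
Proof. exact: foldl_cat. Qed.

Lemma nfa_step_set1 q a : nfa_step [set q] a = n_delta A q a.
Proof. by rewrite /nfa_step big_set1. Qed.

Lemma nfa_reachS w X Y : X \subset Y -> nfa_reach A X w \subset nfa_reach A Y w.
Proof.
elim: w X Y => [|a w IHw] X Y sXY //.
rewrite !nfa_reach_cons; apply: IHw; apply/bigcupsP => q qX.
exact: bigcup_sup (subsetP sXY q qX).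
Qed.

Lemma mem_nfa_reach w X x :
  x \in nfa_reach A X w -> exists2 q, q \in X & x \in nfa_reach A [set q] w.
Proof.
elim: w X => [|a w IHw] X; first by exists x; rewrite /= ?set11.
rewrite nfa_reach_cons => /IHw [p /bigcupP [q qX pq] xp]; exists q => //.
rewrite nfa_reach_cons nfa_step_set1; apply: subsetP xp.
by apply: nfa_reachS; rewrite sub1set.
Qed.

Lemma nfa_accepts_cat u v :
  nfa_accepts A (u ++ v) =
  [exists q in nfa_reach A [set n_init A] u, nfa_accepts_from q v].
Proof.
apply/existsP/existsP => [[f /andP [fR fF]] | [q /andP [qR /existsP [f /andP [fR fF]]]]].
  rewrite nfa_reach_cat in fR; have [q qR fq] := mem_nfa_reach fR.
  by exists q; rewrite qR; apply/existsP; exists f; rewrite fq.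
exists f; rewrite fF andbT nfa_reach_cat; apply: subsetP fR.
by apply: nfa_reachS; rewrite sub1set.
Qed.

Lemma nfa_fooling_set (I : finType) (x y : I -> seq S) :
  (forall i, nfa_accepts A (x i ++ y i)) ->
  (forall i j, i != j -> ~~ (nfa_accepts A (x i ++ y j) && nfa_accepts A (x j ++ y i))) ->
  #|I| <= n.
Proof.
move=> acc_xy fool.
have /fin_all_exists [h hP] i : exists q,
    (q \in nfa_reach A [set n_init A] (x i)) && nfa_accepts_from q (y i).
  by apply/existsP; rewrite -nfa_accepts_cat.
have accepts_cross i j : h i = h j -> nfa_accepts A (x i ++ y j).
  move=> hij; rewrite nfa_accepts_cat; apply/existsP; exists (h i).
  by have /andP [-> _] := hP i; have /andP [_] := hP j; rewrite hij.
suff /leq_card : injective h by rewrite card_ord.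
move=> i j hij; apply/eqP; apply/negPn/negP => /fool.
by rewrite (accepts_cross i j hij) (accepts_cross j i (esym hij)).
Qed.

Lemma suffix_closed_init_dominant :
  (forall q a, n_delta A q a \subset n_delta A (n_init A) a) ->
  n_init A \in n_final A -> suffix_closed (nfa_accepts A).
Proof.
move=> dom init_final y z; rewrite nfa_accepts_cat => /existsP [q /andP [_]].
case: z => [|a z] /existsP [f /andP [fR fF]]; apply/existsP.
  by exists (n_init A); rewrite /= set11.
exists f; rewrite fF andbT; apply: subsetP fR.
by rewrite !nfa_reach_cons !nfa_step_set1; apply: nfa_reachS.
Qed.

End NfaReach.

Lemma dfa_distinguishable_card (S : finType) (L : seq S -> bool) (I : finType)
    (w : I -> seq S) m (D : dfa S m) :
  (forall u, dfa_accepts D u = L u) ->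
  (forall i j, i != j -> exists z, L (w i ++ z) != L (w j ++ z)) -> #|I| <= m.
Proof.
move=> DL dist; pose h i := foldl (d_delta D) (d_init D) (w i).
suff /leq_card : injective h by rewrite card_ord.
move=> i j hij; apply/eqP; apply/negPn/negP => /dist [z].
by rewrite -!DL /dfa_accepts !foldl_cat -/(h i) -/(h j) hij eqxx.
Qed.

Lemma dfa_of_finType (S T : finType) (t0 : T) (d : T -> S -> T) (f : pred T) :
  exists D : dfa S #|T|, forall w, dfa_accepts D w = f (foldl d t0 w).
Proof.
pose d' (p : 'I_#|T|) a := enum_rank (d (enum_val p) a).
exists (DFA (enum_rank t0) d' [set p | f (enum_val p)]) => w; rewrite /dfa_accepts /=.
suff -> : forall t, foldl d' (enum_rank t) w = enum_rank (foldl d t w).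
  by rewrite inE enum_rankK.
by elim: w => [|a w IHw] t //=; rewrite /d' enum_rankK IHw.
Qed.

Lemma exists_subset_card (T : finType) (A : {set T}) m :
  m <= #|A| -> exists2 E : {set T}, E \subset A & #|E| = m.
Proof.
case/card_geqP => s [uniq_s size_s sA]; exists [set x in s].
  by apply/subsetP => x; rewrite inE => /sA.
by rewrite cardsE -size_s; apply/card_uniqP.
Qed.

Section Witness.
Variable k : nat.
Implicit Types (X Y : {set 'I_k.+1}) (i q : 'I_k.+1).

Definition q0 : 'I_k.+1 := ord0.
Definition qlast : 'I_k.+1 := ord_max.
Definition singletons : {set {set 'I_k.+1}} := [set [set i] | i in [set~ q0]].
Definition extra_pool : {set {set 'I_k.+1}} := powerset [set~ q0] :\: singletons.

Variable extra : {set {set 'I_k.+1}}.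
Hypothesis extra_sub : extra \subset extra_pool.

Definition family : {set {set 'I_k.+1}} := [set q0] |: (singletons :|: extra).
Definition dstate : finType := {X | X \in family}.
Definition letter : finType := (dstate + 'I_k.+1)%type.

(* Sending the other states to [qlast] rather than to the empty set keeps the
   empty set out of the reachable subsets unless it is chosen in [extra]. *)
Definition witness_delta q (a : letter) : {set 'I_k.+1} :=
  match a with
  | inl X => val X
  | inr i => if (q == q0) || (q == i) then [set q0; qlast] else [set qlast]
  end.

Definition witness_nfa : nfa letter k.+1 := NFA q0 witness_delta [set q0].

Lemma witness_delta_sub q a : witness_delta q a \subset witness_delta q0 a.
Proof.
case: a => [X|i] //=; case: ifP => _ //.
by rewrite sub1set !inE eqxx orbT.
Qed.

Lemma qlast_neq_q0 i : i != q0 -> qlast != q0.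
Proof.
apply: contraNN => /eqP/(congr1 val) /= k0; apply/eqP/val_inj => /=.
by have := ltn_ord i; lia.
Qed.

Lemma family_mem_q0 X : X \in family -> q0 \in X -> X = [set q0].
Proof.
rewrite !inE => /orP [/eqP // | /orP [/imsetP [i] | extraX]].
  by move=> _ -> /set1P ->.
move: (subsetP extra_sub _ extraX); rewrite !inE => /andP [_].
by move=> /subsetP /[apply]; rewrite !inE eqxx.
Qed.

Lemma set1_in_family i : [set i] \in family.
Proof.
have [-> | iq0] := eqVneq i q0; first by rewrite !inE eqxx.
by rewrite !inE; apply/orP; right; apply/orP; left; apply/imsetP; exists i; rewrite ?inE.
Qed.

Definition collapse X := if q0 \in X then [set q0] else X.

Lemma mem_q0_collapse X : (q0 \in collapse X) = (q0 \in X).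
Proof. by rewrite /collapse; case: ifPn => [_ | /negbTE]; rewrite ?set11. Qed.

Lemma collapse_family X : X \in family -> collapse X \in family.
Proof. by rewrite /collapse; case: ifP => // _ _; apply: set1_in_family. Qed.

Lemma nfa_step_mem_q0 X a : q0 \in X -> nfa_step witness_nfa X a = witness_delta q0 a.
Proof.
move=> q0X; apply/eqP; rewrite eqEsubset; apply/andP; split.
  by apply/bigcupsP => q _; apply: witness_delta_sub.
exact: (bigcup_sup q0 q0X).
Qed.

Lemma collapse_step X a :
  collapse (nfa_step witness_nfa (collapse X) a) = collapse (nfa_step witness_nfa X a).
Proof.
rewrite [collapse X]/collapse; case: ifP => // q0X.
by rewrite nfa_step_set1 nfa_step_mem_q0.
Qed.

Lemma collapse_step_family X a :
  X \in family -> collapse (nfa_step witness_nfa X a) \in family.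
Proof.
move=> famX; have [X0 | [x xX]] := set_0Vmem X.
  by rewrite X0 /nfa_step big_set0 /collapse in_set0 -X0.
case: a => [Y | i].
  have -> : nfa_step witness_nfa X (inl Y) = val Y.
    apply/eqP; rewrite eqEsubset; apply/andP; split; last exact: (bigcup_sup x xX).
    by apply/bigcupsP => q _; apply: subxx.
  exact/collapse_family/valP.
rewrite /collapse; case: ifPn => [_ | q0_out]; first exact: set1_in_family.
suff -> : nfa_step witness_nfa X (inr i) = [set qlast] by apply: set1_in_family.
apply/eqP; rewrite eqEsubset; apply/andP; split.
  apply/bigcupsP => q qX; have : q0 \notin witness_delta q (inr i).
    by apply: contra q0_out => q0q; apply/bigcupP; exists q.
  by rewrite /=; case: ifP => _; rewrite ?inE ?eqxx // => _; apply: subxx.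
rewrite sub1set; apply/bigcupP; exists x => //=.
by case: ifP => _; rewrite !inE eqxx ?orbT.
Qed.

Lemma witness_acceptsE w :
  nfa_accepts witness_nfa w = (q0 \in nfa_reach witness_nfa [set q0] w).
Proof.
rewrite /nfa_accepts /=; apply/existsP/idP => [[f /andP [fR /set1P f0]] | q0R].
  by rewrite f0 in fR.
by exists q0; rewrite q0R set11.
Qed.

Definition dstart : dstate := exist _ [set q0] (set1_in_family q0).

Definition dstep (X : dstate) (a : letter) : dstate :=
  exist _ (collapse (nfa_step witness_nfa (val X) a)) (collapse_step_family a (valP X)).

Lemma val_foldl_dstep w (X : dstate) Y :
  val X = collapse Y -> val (foldl dstep X w) = collapse (nfa_reach witness_nfa Y w).
Proof.
elim: w X Y => [|a w IHw] X Y XY //.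
by rewrite nfa_reach_cons; apply: IHw; rewrite /= XY collapse_step.
Qed.

Lemma witness_dfa :
  exists D : dfa letter #|dstate|, forall w, dfa_accepts D w = nfa_accepts witness_nfa w.
Proof.
have [D DE] := dfa_of_finType dstart dstep (fun X : dstate => q0 \in val X).
exists D => w; rewrite DE witness_acceptsE (val_foldl_dstep w (Y := [set q0])).
  by rewrite mem_q0_collapse.
by rewrite /collapse set11.
Qed.

Lemma nfa_reach_inl (X : dstate) w :
  nfa_reach witness_nfa [set q0] (inl X :: w) = nfa_reach witness_nfa (val X) w.
Proof. by rewrite nfa_reach_cons nfa_step_set1. Qed.

Lemma mem_q0_step_inr X i : q0 \notin X -> i != q0 ->
  (q0 \in nfa_step witness_nfa X (inr i)) = (i \in X).
Proof.
move=> q0_out iq0; apply/bigcupP/idP => [[q qX] | iX].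
  rewrite /=; case: ifP => [/orP [/eqP qq0 | /eqP <- //] | _].
    by rewrite -qq0 qX in q0_out.
  by rewrite in_set1 eq_sym (negbTE (qlast_neq_q0 iq0)).
by exists i => //=; rewrite eqxx orbT !inE eqxx.
Qed.

Lemma dstate_distinguishable (X Y : dstate) : X != Y -> exists z,
  nfa_accepts witness_nfa (inl X :: z) != nfa_accepts witness_nfa (inl Y :: z).
Proof.
move=> neqXY; have neq_val : val X != val Y by apply: contra neqXY => /eqP/val_inj ->.
have [q0X | q0nX] := boolP (q0 \in val X); have [q0Y | q0nY] := boolP (q0 \in val Y).
- by case/eqP: neq_val; rewrite (family_mem_q0 (valP X) q0X) (family_mem_q0 (valP Y) q0Y).
- by exists [::]; rewrite !witness_acceptsE !nfa_reach_inl /= q0X (negbTE q0nY).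
- by exists [::]; rewrite !witness_acceptsE !nfa_reach_inl /= q0Y (negbTE q0nX).
have [i Xi_neq_Yi] : exists i, (i \in val X) != (i \in val Y).
  apply/existsP; apply: contraR neq_val => /existsPn sameXY; apply/eqP/setP => i.
  by apply/eqP; have := sameXY i; rewrite negbK.
have iq0 : i != q0.
  by apply: contraNneq Xi_neq_Yi => ->; rewrite (negbTE q0nX) (negbTE q0nY).
exists [:: inr i].
by rewrite !witness_acceptsE !nfa_reach_inl !nfa_reach_cons /= !mem_q0_step_inr.
Qed.

Definition fool_prefix i : seq letter := [:: inl (exist _ [set i] (set1_in_family i))].
Definition fool_suffix i : seq letter := if i == q0 then [::] else [:: inr i].

Lemma witness_accepts_fool i j :
  nfa_accepts witness_nfa (fool_prefix i ++ fool_suffix j) = (i == q0) || (i == j).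
Proof.
rewrite witness_acceptsE /fool_suffix; case: ifPn => [/eqP -> | jq0].
  by rewrite cats0 nfa_reach_inl /= in_set1 eq_sym orbb.
rewrite nfa_reach_inl nfa_reach_cons nfa_step_set1 /=.
case: ifP => _; first by rewrite !inE eqxx.
by rewrite in_set1 eq_sym (negbTE (qlast_neq_q0 jq0)).
Qed.

Lemma witness_nfa_minimal : minimal_nfa witness_nfa.
Proof.
move=> m B BA; have := nfa_fooling_set (A := B) (x := fool_prefix) (y := fool_suffix).
rewrite card_ord; apply=> [i | i j ij]; rewrite !BA !witness_accepts_fool.
  by rewrite eqxx orbT.
have [iq0 | iq0] := eqVneq i q0; first by rewrite /= -iq0 orbb eq_sym.
by rewrite (negbTE ij).
Qed.

Lemma witness_suffix_closed : suffix_closed (nfa_accepts witness_nfa).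
Proof.
by apply: suffix_closed_init_dominant => [q a |]; rewrite ?witness_delta_sub ?set11.
Qed.

Lemma witness_dfa_card_geq m (D : dfa letter m) :
  (forall w, dfa_accepts D w = nfa_accepts witness_nfa w) -> #|dstate| <= m.
Proof.
move=> DA; apply: (dfa_distinguishable_card (w := fun X : dstate => [:: inl X]) DA).
exact: dstate_distinguishable.
Qed.

Lemma card_singletons : #|singletons| = k.
Proof. by rewrite card_imset ?cardsC1 ?card_ord //; apply: set1_inj. Qed.

Lemma singletons_sub : singletons \subset powerset [set~ q0].
Proof. by apply/subsetP => _ /imsetP [i iq0 ->]; rewrite powersetE sub1set. Qed.

Lemma card_extra_pool : #|extra_pool| = 2 ^ k - k.
Proof.
by rewrite cardsD (setIidPr singletons_sub) card_singletons card_powerset cardsC1 card_ord.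
Qed.

Lemma card_dstate : #|dstate| = k.+1 + #|extra|.
Proof.
have -> : #|dstate| = #|family| by rewrite card_sig; apply: eq_card => X; rewrite inE.
have avoid_q0 : singletons :|: extra \subset powerset [set~ q0].
  by rewrite subUset singletons_sub (subset_trans extra_sub) ?subsetDl.
have q0_out : [set q0] \notin singletons :|: extra.
  by apply: contraNN (subsetP avoid_q0 _) _; rewrite powersetE sub1set !inE eqxx.
have disj : singletons :&: extra = set0.
  apply/setP => X; rewrite !inE; apply/andP => -[sX /(subsetP extra_sub)].
  by rewrite inE sX.
by rewrite cardsU1 q0_out cardsU disj cards0 subn0 card_singletons.
Qed.

End Witness.

Theorem mainTheorem8 (n alpha : nat) :
  1 <= n -> n <= alpha -> alpha <= 2 ^ n.-1 + 1 ->
  exists (S : finType) (A : nfa S n),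
    [/\ minimal_nfa A, suffix_closed (nfa_accepts A) & min_dfa_states (nfa_accepts A) alpha].
Proof.
case: n => [// | k] _ n_le_alpha alpha_le; rewrite /= in alpha_le.
have k_lt : k < 2 ^ k by apply: ltn_expl.
have [extra extra_sub card_extra] :
    exists2 E : {set {set 'I_k.+1}}, E \subset extra_pool k & #|E| = alpha - k.+1.
  by apply: exists_subset_card; rewrite card_extra_pool; lia.
have card_states : #|dstate extra| = alpha by rewrite card_dstate // card_extra; lia.
exists (letter extra), (witness_nfa extra); split.
- exact: witness_nfa_minimal.
- exact: witness_suffix_closed.
- rewrite -card_states; split; [exact: witness_dfa | exact: witness_dfa_card_geq].
Qed.
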